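(* Let $(\mathbb E;B,Q;M)$ be a metric double vector bundle with core $Q^*$, and let $D\subseteq\mathbb E$ be a double vector subbundle with sides $B'\subseteq B$, $U\subseteq Q$ and core $K\subseteq Q^*$. Let $\Sigma\colon B\times_MQ\to\mathbb E$ be a linear splitting adapted to $D$, i.e. $\Sigma(B'\times_MU)\subseteq D$, and let $\Lambda$ be the symmetric form defined by $\Sigma$. Then the double subbundle $D\to B'$ is isotropic if and only if $K\subseteq U^\circ$ and $\Lambda(u_1,u_2)\in(B')^\circ$ for all $m\in M$ and $u_1,u_2\in U_m$.
   Context: A double vector bundle $(\mathbb E;B,Q;M)$ with core $Q^*$: $\mathbb E$ carries vector bundle structures over $B$ and over $Q$ (with $B,Q\to M$) which commute; the core is the intersection of the kernels of the two projections, a vector bundle over $M$. A linear splitting $\Sigma\colon B\times_MQ\to\mathbb E$ is a double vector bundle embedding inducing the identity on $B$ and $Q$; it yields an identification $\mathbb E\cong B\times_MQ\times_MQ^*$ (with $(b,q,\tau)+_B(b,q',\tau')=(b,q+q',\tau+\tau')$ and $(b,q,\tau)+_Q(b',q,\tau')=(b+b',q,\tau+\tau')$), horizontal lifts $\sigma_Q(q)(b_m)=\Sigma(b_m,q(m))$ and core sections $\tau^\dagger(b_m)=(b_m,0,\tau(m))$ of $\mathbb E\to B$. The double vector bundle is metric if $\mathbb E\to B$ carries a symmetric fibrewise nondegenerate pairing with $\langle\tau_1^\dagger,\tau_2^\dagger\rangle=0$, $\langle\chi,\tau^\dagger\rangle=q_B^*\langle q,\tau\rangle$ for any linear section $\chi$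 over $q\in\Gamma(Q)$, and $\langle\chi_1,\chi_2\rangle$ fibrewise linear on $B$ for linear sections. The form $\Lambda$, a symmetric bilinear bundle map $Q\times_MQ\to B^*$, is defined by $\langle\sigma_Q(q_1),\sigma_Q(q_2)\rangle=\ell_{\Lambda(q_1,q_2)}$, where $\ell_\beta\colon B\to\mathbb R$ is the linear function of $\beta\in\Gamma(B^* )$; equivalently $\langle(b,q_1,\tau_1),(b,q_2,\tau_2)\rangle=\langle\Lambda(q_1,q_2),b\rangle+\langle q_1,\tau_2\rangle+\langle q_2,\tau_1\rangle$. A double vector subbundle with sides $B',U$ and core $K$ adapted to $\Sigma$ corresponds to $B'\times_MU\times_MK$. $D\to B'$ is isotropic if $\langle d_1,d_2\rangle=0$ for $d_1,d_2\in D$ in the same fibre over $B'$. $U^\circ\subseteq Q^*$ and $(B')^\circ\subseteq B^*$ are annihilators. *)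

(* Fibrewise model of a metric double vector bundle
   (E; B, Q; M) with core Q^*, already decomposed via a linear splitting
   Sigma : E ~ B x_M Q x_M Q^*. *)
From HB Require Import structures.
From mathcomp Require Import all_boot all_order all_algebra.
From mathcomp Require Import reals.
Set Implicit Arguments. Unset Strict Implicit. Unset Printing Implicit Defensive.
Import Order.TTheory GRing.Theory Num.Theory.
Local Open Scope ring_scope.

Section MetricDVB.
Variables (R : realType) (M : Type) (B Q : M -> vectType R).

Definition core (m : M) : vectType R := 'Hom(Q m, R^o).

(* Under Sigma, a point of E over b_m in B is (b_m, q, tau); the fibre of
   E -> B over b_m is thus identified with Q_m x Q^*_m, with +_B and the
   scalar multiplication of E -> B acting componentwise on (q, tau). *)
Definition EB_fibre (m : M) := (Q m * core m)%type.

(* core section tau^dagger at b_m : (b_m, 0, tau) *)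
Definition core_pt m (tau : core m) : EB_fibre m := (0, tau).
(* horizontal lift sigma_Q(q) at b_m : Sigma(b_m, q) = (b_m, q, 0) *)
Definition hor_pt m (q : Q m) : EB_fibre m := (q, 0).
(* a linear section chi of E -> B over q in Gamma(Q) at the point m:
   b_m |-> (b_m, q(m), phi_m(b_m)) with phi_m : B_m -> Q^*_m linear *)
Definition lin_pt m (q : Q m) (phi : 'Hom(B m, core m)) (b : B m) : EB_fibre m :=
  (q, phi b).

Definition linear_in_b m (f : B m -> R) : Prop :=
  forall (a : R) (b b' : B m), f (a *: b + b') = a * f b + f b'.

Definition is_metric_DVB
  (g : forall m : M, B m -> EB_fibre m -> EB_fibre m -> R) : Prop :=
      (forall m b x y, g m b x y = g m b y x) /\
      (* fibrewise bilinear (linear in the first slot; with symmetry, in both) *)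
      (forall m b (a : R) x x' y, g m b (a *: x + x') y = a * g m b x y + g m b x' y) /\
      (forall m b x, (forall y, g m b x y = 0) -> x = 0) /\
      (forall m b (t1 t2 : core m), g m b (core_pt t1) (core_pt t2) = 0) /\
      (forall m (q : Q m) phi (t : core m) b,
        g m b (lin_pt q phi b) (core_pt t) = t q) /\
      (forall m (q1 q2 : Q m) phi1 phi2,
        linear_in_b (fun b => g m b (lin_pt q1 phi1 b) (lin_pt q2 phi2 b))).

(* The symmetric form Lambda defined by Sigma:
   <sigma_Q(q1), sigma_Q(q2)> = ell_{Lambda(q1,q2)}; Lambda m q1 q2 is the
   linear function on B_m (an element of B^*_m). *)
Definition Lambda (g : forall m : M, B m -> EB_fibre m -> EB_fibre m -> R)
  (m : M) (q1 q2 : Q m) : B m -> R :=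
  fun b => g m b (hor_pt q1) (hor_pt q2).

(* The double subbundle D with sides B', U and core K, adapted to Sigma,
   is B' x_M U x_M K; D -> B' is isotropic iff the pairing vanishes on any
   two points of D in the same fibre over B'. *)
Definition isotropic_sub (g : forall m : M, B m -> EB_fibre m -> EB_fibre m -> R)
  (B' : forall m, {vspace B m}) (U : forall m, {vspace Q m})
  (K : forall m, {vspace core m}) : Prop :=
  forall m (b : B m) (u1 u2 : Q m) (k1 k2 : core m),
    b \in B' m -> u1 \in U m -> u2 \in U m -> k1 \in K m -> k2 \in K m ->
    g m b (u1, k1) (u2, k2) = 0.

Definition core_in_annihilator (U : forall m, {vspace Q m})
  (K : forall m, {vspace core m}) : Prop :=
  forall m (k : core m), k \in K m -> forall u : Q m, u \in U m -> k u = 0.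

Definition in_annihilator m (B'm : {vspace B m}) (beta : B m -> R) : Prop :=
  forall b : B m, b \in B'm -> beta b = 0.

End MetricDVB.

(* Via the splitting, a point of D over b is (b, u, k) with u in U and k in K,
   and the pairing of two such points expands as
     <(b,u1,k1), (b,u2,k2)> = Lambda(u1,u2)(b) + k2(u1) + k1(u2),
   the core-core term vanishing.  Isotropy on pairs (b,u,0), (0,0,k) forces
   K into the annihilator of U, and on pairs (b,u1,0), (b,u2,0) forces
   Lambda(u1,u2) into that of B'; conversely these two conditions kill every
   term of the expansion. *)
From HB Require Import structures.
From mathcomp Require Import all_boot all_order all_algebra.
From mathcomp Require Import reals.
Import GRing.Theory Num.Theory.
Local Open Scope ring_scope.

Section PairingExpansion.
Variables (R : realType) (M : Type) (B Q : M -> vectType R).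
Variable g : forall m : M, B m -> EB_fibre Q m -> EB_fibre Q m -> R.

Hypothesis g_sym : forall m b x y, g m b x y = g m b y x.
Hypothesis g_linear : forall m b (a : R) x x' y,
  g m b (a *: x + x') y = a * g m b x y + g m b x' y.
Hypothesis g_core_core : forall m b (t1 t2 : core Q m),
  g m b (core_pt t1) (core_pt t2) = 0.
Hypothesis g_lin_core : forall m (q : Q m) phi (t : core Q m) b,
  g m b (lin_pt q phi b) (core_pt t) = t q.

Lemma pairingDl m b (x x' y : EB_fibre Q m) :
  g m b (x + x') y = g m b x y + g m b x' y.
Proof. by rewrite -{1}[x]scale1r g_linear mul1r. Qed.

Lemma pairingDr m b (x y y' : EB_fibre Q m) :
  g m b x (y + y') = g m b x y + g m b x y'.
Proof. by rewrite g_sym pairingDl !(g_sym _ _ x). Qed.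

(* The horizontal lift is the linear section with zero core component. *)
Lemma pairing_hor_core m b (u : Q m) (k : core Q m) :
  g m b (hor_pt u) (core_pt k) = k u.
Proof. by rewrite -(g_lin_core _ u 0 k b) /lin_pt lfunE. Qed.

Lemma EB_fibre_decomp m (u : Q m) (k : core Q m) :
  (u, k) = hor_pt u + core_pt k.
Proof. by rewrite -[RHS]/(u + 0, 0 + k) addr0 add0r. Qed.

Lemma pairing_expand m b (u1 u2 : Q m) (k1 k2 : core Q m) :
  g m b (u1, k1) (u2, k2) = Lambda g u1 u2 b + k2 u1 + k1 u2.
Proof.
rewrite !EB_fibre_decomp !pairingDl !pairingDr g_core_core addr0.
by rewrite !pairing_hor_core (g_sym _ _ (core_pt k1)) pairing_hor_core.
Qed.

Lemma isotropic_core_in_annihilator B' U K :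
  isotropic_sub g B' U K -> core_in_annihilator U K.
Proof.
move=> iso m k Kk u Uu.
have := iso m 0 u 0 0 k (mem0v _) Uu (mem0v _) (mem0v _) Kk.
by rewrite EB_fibre_decomp addr0 pairing_hor_core.
Qed.

Lemma isotropic_Lambda_in_annihilator B' U K :
  isotropic_sub g B' U K ->
  forall m (u1 u2 : Q m), u1 \in U m -> u2 \in U m ->
    in_annihilator (B' m) (Lambda g u1 u2).
Proof. by move=> iso m u1 u2 Uu1 Uu2 b B'b; exact: iso (mem0v _) (mem0v _). Qed.

Lemma isotropic_subP B' U K :
  isotropic_sub g B' U K <->
  (core_in_annihilator U K /\
   forall m (u1 u2 : Q m), u1 \in U m -> u2 \in U m ->
     in_annihilator (B' m) (Lambda g u1 u2)).
Proof.
split.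
- move=> iso; split.
  + exact: isotropic_core_in_annihilator iso.
  + exact: isotropic_Lambda_in_annihilator iso.
- move=> [KU Lambda_B'] m b u1 u2 k1 k2 B'b Uu1 Uu2 Kk1 Kk2.
  rewrite pairing_expand (Lambda_B' m u1 u2 Uu1 Uu2 b B'b).
  by rewrite (KU m k2 Kk2 u1 Uu1) (KU m k1 Kk1 u2 Uu2) !addr0.
Qed.

End PairingExpansion.

Arguments isotropic_subP {R M B Q g}.

Theorem proposition5p1 (R : realType) (M : Type) (B Q : M -> vectType R)
  (g : forall m : M, B m -> EB_fibre Q m -> EB_fibre Q m -> R)
  (B' : forall m, {vspace B m}) (U : forall m, {vspace Q m})
  (K : forall m, {vspace core Q m}) :
  is_metric_DVB g ->
  (isotropic_sub g B' U K <->
   (core_in_annihilator U K /\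
    forall (m : M) (u1 u2 : Q m), u1 \in U m -> u2 \in U m ->
      in_annihilator (B' m) (Lambda g u1 u2))).
Proof.
move=> [g_sym [g_linear [_ [g_core_core [g_lin_core _]]]]].
exact: (isotropic_subP g_sym g_linear g_core_core g_lin_core).
Qed.
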